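(* Let $G$ be a stacked $4$-polytopal graph. If $G$ has an induced subgraph isomorphic to $G_3\star G_6$ for some graph $G_3$ on $3$ vertices and some graph $G_6$ on $6$ vertices, then $G$ has an induced subgraph isomorphic to $K_3\star P_6$.
   Context: A stacked $4$-polytopal graph is the $1$-skeleton of a stacked $4$-polytope, i.e. of a simplicial $4$-polytope obtained from a $4$-simplex by repeatedly gluing a new $4$-simplex onto a facet. $K_3$ is the triangle, $P_6$ the path on $6$ vertices, $\star$ the graph join. *)

From mathcomp Require Import all_boot.
Set Implicit Arguments. Unset Strict Implicit. Unset Printing Implicit Defensive.

(* State: number of vertices n (vertices 0..n-1), adjacency relation on nat,
   and the set of facets (tetrahedra), each facet a strictly increasing
   list of 4 vertices.  Stacking on facet F adds vertex n adjacent to the vertices of F;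
   F stops being a facet and the 4 facets (F \ {x}) u {n} appear. *)

Definition simplex_edges : rel nat := fun i j => [&& i < 5, j < 5 & i != j].
Definition simplex_facets : pred (seq nat) :=
  fun F => [&& sorted ltn F, size F == 4 & all (fun i => i < 5) F].

Definition stack_edges (n : nat) (e : rel nat) (F : seq nat) : rel nat :=
  fun i j => [|| e i j, (i == n) && (j \in F) | (j == n) && (i \in F)].
Definition stack_facets (n : nat) (f : pred (seq nat)) (F : seq nat)
  : pred (seq nat) :=
  fun G => (f G && (G != F)) || has (fun x => G == rcons (rem x F) n) F.

Inductive stacked4 : nat -> rel nat -> pred (seq nat) -> Prop :=
| stacked4_simplex : stacked4 5 simplex_edges simplex_facets
| stacked4_stack n e f F :
    stacked4 n e f -> f F ->
    stacked4 n.+1 (stack_edges n e F) (stack_facets n f F).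

Definition stacked4_polytopal_graph (V : finType) (E : rel V) : Prop :=
  exists n e f (h : V -> nat),
    [/\ stacked4 n e f, injective h,
        (forall v, h v < n), (forall i, i < n -> exists v, h v = i)
      & forall u v, E u v = e (h u) (h v)].

Definition simple_graph (V : Type) (E : rel V) : Prop :=
  (forall u v, E u v = E v u) /\ (forall v, ~~ E v v).

Definition has_induced (V W : finType) (E : rel V) (H : rel W) : Prop :=
  exists phi : W -> V, injective phi /\ forall a b, E (phi a) (phi b) = H a b.

Definition gjoin (A B : finType) (EA : rel A) (EB : rel B) : rel (A + B) :=
  fun x y => match x, y with
             | inl a, inl a' => EA a a'
             | inr b, inr b' => EB b b'
             | _, _ => true
             end.

Definition K3 : rel 'I_3 := fun i j => i != j.
Definition P6 : rel 'I_6 := fun i j => ((i : nat).+1 == j) || ((j : nat).+1 == i).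

From mathcomp Require Import all_boot zify.
Set Implicit Arguments. Unset Strict Implicit. Unset Printing Implicit Defensive.

(* Every graph produced by the stacking process satisfies an invariant
   ([stacked_inv]), proved by induction on the stacking sequence:
   - it has no induced 4-cycle (every 4-cycle has a chord);
   - the common neighbourhood (the link) of every triangle a b c induces a
     path, and every facet containing a, b, c contains an end of that path.
   When a new vertex is stacked on a facet F, the link of a triangle through
   the new vertex is the edge F minus the triangle, and the link of an old
   triangle inside F grows by the new vertex, glued at the end lying in F.

   For the theorem, call A (3 vertices) and B (6 vertices) the sides of the
   join.  If A had a non-edge, chordality would make B a clique, and the link
   of a triangle of B would contain a triangle of B: impossible in a path.
   So A is a triangle, whose link is an induced path through the 6 vertices
   of B; its first 6 vertices together with A induce K3 * P6. *)

Definition induced_path (e : rel nat) (s : seq nat) : Prop :=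
  uniq s /\ forall i j, i < size s -> j < size s ->
    e (nth 0 s i) (nth 0 s j) = (i.+1 == j) || (j.+1 == i).

Lemma eq_induced_path (e e' : rel nat) s :
  {in s &, forall x y, e x y = e' x y} -> induced_path e s -> induced_path e' s.
Proof.
move=> ee' [us ed]; split=> // i j hi hj.
by rewrite -ee' ?mem_nth ?ed.
Qed.

Lemma induced_path_rev e s : induced_path e s -> induced_path e (rev s).
Proof.
case=> us ed; split; first by rewrite rev_uniq.
move=> i j; rewrite size_rev => hi hj.
by rewrite !nth_rev // ed; lia.
Qed.

Lemma induced_path_pair (e : rel nat) x y :
  (forall z, ~~ e z z) -> e x y -> e y x -> induced_path e [:: x; y].
Proof.
move=> irr exy eyx; split.
  by rewrite /= inE andbT; apply: contraTneq exy => ->; exact: irr.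
by case=> [|[|i]] [|[|j]] //= _ _; rewrite ?(negbTE (irr _)).
Qed.

Lemma induced_path_cons (e : rel nat) v s :
  induced_path e s -> 0 < size s -> v \notin s -> ~~ e v v ->
  (forall x, e x v = e v x) -> (forall x, x \in s -> e v x = (x == head 0 s)) ->
  induced_path e (v :: s).
Proof.
move=> [us ed] s0 vs irr sym hd; split; first by rewrite /= vs.
have hdj j : j < size s -> e v (nth 0 s j) = (j == 0).
  move=> hj; rewrite hd ?mem_nth // -[head 0 s]/(nth 0 s 0) nth_uniq //.
case=> [|i] [|j] /= hi hj; first by rewrite (negbTE irr).
- by rewrite hdj // orbF eq_sym.
- by rewrite sym hdj // eq_sym.
- by rewrite ed.
Qed.

(* An induced path contains no triangle: of three indices one differs from
   each other one by 1, which cannot happen for all three pairs. *)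
Lemma induced_path_no_triangle (e : rel nat) s x y z :
  induced_path e s -> x \in s -> y \in s -> z \in s ->
  x != y -> y != z -> x != z -> e x y -> e y z -> e x z -> False.
Proof.
case=> us ed xs ys zs.
rewrite -(nth_index 0 xs) -(nth_index 0 ys) -(nth_index 0 zs).
rewrite !nth_uniq ?index_mem // !ed ?index_mem //.
move: (index x s) (index y s) (index z s) => i j k.
by move=> /eqP ? /eqP ? /eqP ? /orP[] /eqP ? /orP[] /eqP ? /orP[] /eqP ?; lia.
Qed.

Definition link_path (e : rel nat) (f : pred (seq nat)) (a b c : nat) (s : seq nat)
  : Prop :=
  [/\ 0 < size s, induced_path e s,
      (forall x, (x \in s) = [&& e a x, e b x & e c x])
    & forall G, f G -> a \in G -> b \in G -> c \in G ->
        (head 0 s \in G) || (last 0 s \in G)].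

Lemma head_rev (T : Type) (x0 : T) (s : seq T) : head x0 (rev s) = last x0 s.
Proof. by case/lastP: s => [|s x] //; rewrite rev_rcons last_rcons. Qed.

Lemma last_rev (T : Type) (x0 : T) (s : seq T) : last x0 (rev s) = head x0 s.
Proof. by case: s => [|x s] //; rewrite rev_cons last_rcons. Qed.

Lemma link_path_rev e f a b c s : link_path e f a b c s -> link_path e f a b c (rev s).
Proof.
case=> s0 ps ms fs; split.
- by rewrite size_rev.
- exact: induced_path_rev.
- by move=> x; rewrite mem_rev.
- by move=> G fG aG bG cG; rewrite head_rev last_rev orbC; exact: fs.
Qed.

Lemma link_path_swap12 e f a b c s : link_path e f a b c s -> link_path e f b a c s.
Proof.
case=> s0 ps ms fs; split=> //.
- by move=> x; rewrite ms andbCA.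
- by move=> G fG aG bG cG; apply: fs.
Qed.

Lemma link_path_swap23 e f a b c s : link_path e f a b c s -> link_path e f a c b s.
Proof.
case=> s0 ps ms fs; split=> //.
- by move=> x; rewrite ms [e c x && _]andbC.
- by move=> G fG aG bG cG; apply: fs.
Qed.

Definition facet_of (n : nat) (e : rel nat) (G : seq nat) : Prop :=
  [/\ sorted ltn G, size G = 4, all (fun x => x < n) G
    & forall x y, x \in G -> y \in G -> x != y -> e x y].

Record stacked_inv (n : nat) (e : rel nat) (f : pred (seq nat)) : Prop := {
  inv_sym : forall x y, e x y = e y x;
  inv_irr : forall x, ~~ e x x;
  inv_bound : forall x y, e x y -> x < n;
  inv_facet : forall G, f G -> facet_of n e G;
  inv_chord : forall a b c d, e a b -> e b c -> e c d -> e d a -> a != c -> b != d ->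
    e a c || e b d;
  inv_link : forall a b c, e a b -> e b c -> e a c -> exists s, link_path e f a b c s }.

Lemma size_filter_notin (T : eqType) (L R : seq T) : uniq L -> uniq R -> {subset R <= L} ->
  size [seq x <- L | x \notin R] = size L - size R.
Proof.
move=> uL uR sRL.
have hp : perm_eq [seq x <- L | x \in R] R.
  apply: uniq_perm; [exact: filter_uniq | exact: uR |].
  by move=> x; rewrite mem_filter; case xR: (x \in R); rewrite ?(sRL _ xR).
have := count_predC (mem R) L; rewrite -!size_filter (perm_size hp).
by move=> <-; rewrite addKn.
Qed.

Lemma exists_notin (T : eqType) (G R : seq T) : uniq G -> size R < size G ->
  exists2 w, w \in G & w \notin R.
Proof.
move=> uG hs; case: (boolP (all (mem R) G)) => [/allP h | /allPn [w wG wn]].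
  by have := uniq_leq_size uG h; rewrite leqNgt hs.
by exists w.
Qed.

(* Base case: in K5 the link of a triangle is the remaining edge, and a
   facet through the triangle contains one of its two vertices. *)
Lemma simplex_inv : stacked_inv 5 simplex_edges simplex_facets.
Proof.
have irr x : ~~ simplex_edges x x by rewrite /simplex_edges eqxx !andbF.
split=> //.
- by move=> x y; rewrite /simplex_edges eq_sym andbCA.
- by move=> x y /and3P[].
- move=> G /and3P[hs /eqP hz ha]; split=> // x y xG yG nxy.
  by rewrite /simplex_edges nxy (allP ha _ xG) (allP ha _ yG).
- move=> a b c d /and3P[ha _ _] /and3P[_ hc _] _ _ nac _.
  by rewrite /simplex_edges ha hc nac.
move=> a b c /and3P[ha hb nab] /and3P[_ hc nbc] /and3P[_ _ nac].
set s := [seq x <- iota 0 5 | x \notin [:: a; b; c]].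
have ms x : (x \in s) = [&& simplex_edges a x, simplex_edges b x & simplex_edges c x].
  rewrite /s mem_filter mem_iota /simplex_edges ha hb hc !inE /= !(eq_sym x).
  by case: (x < 5); rewrite ?andbF //; case: (a == x); case: (b == x); case: (c == x).
have sz : size s = 2.
  rewrite /s size_filter_notin ?iota_uniq ?size_iota //.
  - by rewrite /= !inE negb_or nab nac nbc.
  - by move=> x; rewrite mem_iota !inE => /or3P[] /eqP ->.
have us : uniq s by exact/filter_uniq/iota_uniq.
case: s sz us ms => [|x [|y []]] // _ us ms.
have lt5 z : z \in [:: x; y] -> z < 5.
  by rewrite ms => /and3P[/and3P[_ -> _] _ _].
have nxy : x != y by move: us; rewrite /= inE andbT.
have exy : simplex_edges x y && simplex_edges y x.
  by rewrite /simplex_edges !lt5 ?inE ?eqxx ?orbT // nxy eq_sym nxy.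
exists [:: x; y]; split=> //.
- by case/andP: exy => ? ?; apply: induced_path_pair.
- move=> G /and3P[hs /eqP hz hA] aG bG cG.
  have uG : uniq G := sorted_uniq ltn_trans ltnn hs.
  have [w wG] : exists2 w, w \in G & w \notin [:: a; b; c].
    by apply: exists_notin; rewrite ?hz.
  rewrite !inE !negb_or => /and3P[nwa nwb nwc].
  have : w \in [:: x; y].
    by rewrite ms /simplex_edges ha hb hc (allP hA _ wG) !(eq_sym _ w) nwa nwb nwc.
  by rewrite !inE => /orP[] /eqP <-; rewrite wG ?orbT.
Qed.

Lemma sorted_rcons_lt (s : seq nat) m :
  sorted ltn s -> all (fun x => x < m) s -> sorted ltn (rcons s m).
Proof.
case: s => [|x s] // hs ha; rewrite /= rcons_path; move: hs => /= -> /=.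
exact: (allP ha _ (mem_last x s)).
Qed.

Lemma sorted_eq_of_subset (L G H : seq nat) : uniq L -> sorted ltn G -> sorted ltn H ->
  size G = size L -> size H = size L -> {subset L <= G} -> {subset L <= H} -> G = H.
Proof.
move=> uL sG sH zG zH LG LH.
have [_ eG] := uniq_min_size uL LG (eq_leq zG).
have [_ eH] := uniq_min_size uL LH (eq_leq zH).
by apply: (irr_sorted_eq ltn_trans ltnn sG sH) => x; rewrite -eG eH.
Qed.

Section Stacking.

Variables (n : nat) (e : rel nat) (f : pred (seq nat)) (F : seq nat).
Hypotheses (I : stacked_inv n e f) (fF : f F).

Local Notation e' := (stack_edges n e F).
Local Notation f' := (stack_facets n f F).

Let F_facet : facet_of n e F := inv_facet I fF.
Let F_sorted : sorted ltn F. Proof. by case: F_facet. Qed.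
Let F_size : size F = 4. Proof. by case: F_facet. Qed.
Let F_uniq : uniq F. Proof. exact: (sorted_uniq ltn_trans ltnn F_sorted). Qed.
Let F_lt x : x \in F -> x < n.
Proof. by move=> xF; case: F_facet => _ _ /allP /(_ _ xF). Qed.
Let F_ne x : x \in F -> x != n. Proof. by move/F_lt; rewrite ltn_neqAle => /andP[]. Qed.
Let n_notin_F : n \notin F. Proof. by apply/negP => /F_ne; rewrite eqxx. Qed.
Let F_adj x y : x \in F -> y \in F -> e x y = (x != y).
Proof.
move=> xF yF; case: eqVneq => [->|nxy]; first exact/negbTE/(inv_irr I).
by case: F_facet => _ _ _ /(_ x y xF yF nxy) ->.
Qed.
Let e_ltr x y : e x y -> y < n. Proof. by rewrite (inv_sym I) => /(inv_bound I). Qed.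

Lemma stack_old x y : x != n -> y != n -> e' x y = e x y.
Proof. by move=> /negbTE hx /negbTE hy; rewrite /stack_edges hx hy !orbF. Qed.

Lemma stack_new y : e' n y = (y \in F).
Proof.
rewrite /stack_edges eqxx /=; case: (boolP (e n y)) => [/(inv_bound I)|_].
  by rewrite ltnn.
by rewrite (negbTE n_notin_F) andbF orbF.
Qed.

Lemma stack_sym x y : e' x y = e' y x.
Proof. by rewrite /stack_edges (inv_sym I x y) [X in _ || X]orbC. Qed.

Lemma stack_newr x : e' x n = (x \in F).
Proof. by rewrite stack_sym stack_new. Qed.

Lemma stack_wide x y : e x y -> e' x y.
Proof. by rewrite /stack_edges => ->. Qed.

Lemma stack_irr x : ~~ e' x x.
Proof.
case: (eqVneq x n) => [->|xn]; first by rewrite stack_new.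
by rewrite stack_old //; exact: inv_irr I x.
Qed.

Lemma stack_bound x y : e' x y -> x < n.+1.
Proof.
case: (eqVneq x n) => [->//|xn].
case: (eqVneq y n) => [->|yn]; first by rewrite stack_newr => /F_lt /ltnW.
by rewrite stack_old // => /(inv_bound I) /ltnW.
Qed.

Lemma mem_new_facet y x : (x \in rcons (rem y F) n) = (x == n) || (x != y) && (x \in F).
Proof. by rewrite mem_rcons inE (mem_rem_uniq _ F_uniq). Qed.

Lemma stack_facet G : f' G -> facet_of n.+1 e' G.
Proof.
case/orP => [/andP[fG _] | /hasP[y yF /eqP ->]].
  case: (inv_facet I fG) => sG szG aG cG; split=> //.
    by apply/allP => x /(allP aG) /ltnW.
  by move=> x z xG zG nxz; apply/stack_wide/cG.
split.
- apply: sorted_rcons_lt; first exact: (subseq_sorted ltn_trans (rem_subseq y F) F_sorted).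
  by apply/allP => x /mem_rem /F_lt.
- by rewrite size_rcons size_rem // F_size.
- by rewrite all_rcons ltnSn; apply/allP => x /mem_rem /F_lt /ltnW.
- move=> x z; rewrite !mem_new_facet.
  case/orP => [/eqP -> | /andP[_ xF]]; case/orP => [/eqP -> | /andP[_ zF]].
  + by rewrite eqxx.
  + by rewrite stack_new.
  + by rewrite stack_newr.
  + by move=> nxz; rewrite stack_wide // F_adj.
Qed.

(* A 4-cycle through the new vertex has its two neighbours in the clique F. *)
Lemma stack_chord a b c d : e' a b -> e' b c -> e' c d -> e' d a -> a != c -> b != d ->
  e' a c || e' b d.
Proof.
have chordF x y : x \in F -> y \in F -> x != y -> e' x y.
  by move=> xF yF nxy; rewrite stack_wide // F_adj.
case: (eqVneq a n) => [->|an].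
  by rewrite stack_new (stack_sym d) stack_new => bF _ _ dF _ nbd; rewrite (chordF b d) ?orbT.
case: (eqVneq b n) => [->|bn].
  by rewrite (stack_sym a) !stack_new => aF cF _ _ nac _; rewrite (chordF a c).
case: (eqVneq c n) => [->|cn].
  by rewrite (stack_sym b) !stack_new => _ bF dF _ _ nbd; rewrite (chordF b d) ?orbT.
case: (eqVneq d n) => [->|dn].
  by rewrite (stack_sym c) !stack_new => _ _ cF aF nac _; rewrite (chordF a c).
by rewrite !stack_old //; apply: (inv_chord I).
Qed.

(* The link of a triangle n b c is the edge F \ {b, c}. *)
Lemma link_new b c : e' n b -> e' b c -> e' n c -> exists s, link_path e' f' n b c s.
Proof.
rewrite !stack_new => bF ebc cF.
have nbc : b != c by apply: contraTneq ebc => ->; exact: stack_irr.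
set s := [seq x <- F | x \notin [:: b; c]].
have ms z : (z \in s) = [&& e' n z, e' b z & e' c z].
  rewrite mem_filter stack_new !inE negb_or.
  case zF: (z \in F); rewrite ?andbF //= !stack_old ?F_ne // !F_adj //.
  by rewrite andbT !(eq_sym z).
have sz : size s = 2.
  rewrite size_filter_notin ?F_size //= ?inE ?nbc //.
  by move=> z; rewrite !inE => /orP[] /eqP ->.
have us : uniq s by exact: filter_uniq.
have sF z : z \in s -> z \in F by rewrite mem_filter => /andP[].
case: s sz us ms sF => [|x [|y []]] // _ us ms sF.
have [xF yF] : x \in F /\ y \in F by rewrite !sF ?inE ?eqxx ?orbT.
have nxy : x != y by move: us; rewrite /= inE andbT.
exists [:: x; y]; split=> //.
- by apply: induced_path_pair; [exact: stack_irr | |];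
    rewrite stack_wide // F_adj // eq_sym.
- move=> G /orP[/andP[fG _] | /hasP[y0 _ /eqP ->]] nG _ _.
    by case: (inv_facet I fG) => _ _ /allP /(_ _ nG); rewrite ltnn.
  rewrite /= !mem_new_facet xF yF !andbT.
  by case: (eqVneq x y0) => [<-|]; rewrite ?orbT // (eq_sym y x) nxy !orbT.
Qed.

Lemma link_ne a b c s x : link_path e f a b c s -> x \in s -> x != n.
Proof.
by case=> _ _ ms _; rewrite ms => /and3P[/e_ltr + _ _]; rewrite ltn_neqAle => /andP[].
Qed.

Lemma link_old_outside a b c s : a != n -> b != n -> c != n ->
  ~~ [&& a \in F, b \in F & c \in F] ->
  link_path e f a b c s -> link_path e' f' a b c s.
Proof.
move=> an bn cn nF ls; have s_ne := link_ne ls; case: ls => s0 ps ms fs; split=> //.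
- by apply: eq_induced_path ps => x y xs ys; rewrite stack_old ?s_ne.
- move=> x; case: (eqVneq x n) => [->|xn]; last by rewrite ms !stack_old.
  rewrite !stack_newr (negbTE nF).
  by apply/negP => /s_ne; rewrite eqxx.
- move=> G /orP[/andP[fG _] | /hasP[y _ /eqP ->]]; first exact: fs.
  rewrite !mem_new_facet (negbTE an) (negbTE bn) (negbTE cn) /=.
  by move=> /andP[_ aF] /andP[_ bF] /andP[_ cF]; rewrite aF bF cF in nF.
Qed.

(* A triangle a b c inside F has F = {a, b, c, d} with d an end of its link;
   the new vertex is glued to the link at d. *)
Lemma link_old_inside a b c s : e a b -> e b c -> e a c ->
  a \in F -> b \in F -> c \in F ->
  link_path e f a b c s -> head 0 s \in F -> link_path e' f' a b c (n :: s).
Proof.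
move=> eab ebc eac aF bF cF ls dF; have s_ne := link_ne ls; case: ls => s0 ps ms fs.
have ds : head 0 s \in s := mem_nth 0 s0.
have not_abc x : x \in s -> [&& a != x, b != x & c != x].
  rewrite ms => /and3P[ax bx cx].
  by apply/and3P; split; apply: contraTneq isT => ex;
    [move: ax | move: bx | move: cx]; rewrite ex (negbTE (inv_irr I _)).
have abcd_uniq : uniq [:: a; b; c; head 0 s].
  have/and3P[ad bd cd] := not_abc _ ds.
  have ne x y : e x y -> x != y by apply: contraTneq => ->; exact: (inv_irr I).
  by rewrite /= !inE !negb_or (ne a b) // (ne a c) // (ne b c) // ad bd cd.
have F_abcd : [:: a; b; c; head 0 s] =i F.
  have sub : {subset [:: a; b; c; head 0 s] <= F}.
    by move=> x; rewrite !inE => /or4P[] /eqP ->.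
  by case: (uniq_min_size abcd_uniq sub); rewrite ?F_size.
have sF x : x \in s -> (x \in F) = (x == head 0 s).
  move=> xs; rewrite -F_abcd !inE.
  by case/and3P: (not_abc _ xs); rewrite !(eq_sym x) => /negbTE-> /negbTE-> /negbTE->.
split=> //.
- apply: induced_path_cons => //.
  + by apply: eq_induced_path ps => x y xs ys; rewrite stack_old ?s_ne.
  + by apply/negP => /s_ne; rewrite eqxx.
  + exact: stack_irr.
  + by move=> x; exact: stack_sym.
  + by move=> x xs; rewrite stack_new sF.
- move=> x; rewrite inE; case: (eqVneq x n) => [->|xn] /=.
    by rewrite !stack_newr aF bF cF.
  by rewrite ms !stack_old // ?F_ne.
- move=> G /orP[/andP[fG GF] | /hasP[y _ /eqP ->]] aG bG cG; last first.
    by rewrite mem_new_facet eqxx.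
  (* An old facet G <> F through a, b, c cannot contain d, so it contains the
     other end of the link. *)
  case/orP: (fs G fG aG bG cG) => [hG|lG].
    2: by case: (s) s0 lG => //= x s' _ ->; rewrite orbT.
  case/eqP: GF; case: (inv_facet I fG) => sG zG _ _.
  apply: (sorted_eq_of_subset abcd_uniq) => //; rewrite ?zG ?F_size //.
  - by move=> x; rewrite !inE => /or4P[] /eqP ->.
  - by move=> x; rewrite F_abcd.
Qed.

(* Every old triangle has a link after stacking: orient its old link so that
   its head lies in F when the triangle is inside F. *)
Lemma link_old a b c : a != n -> b != n -> c != n -> e a b -> e b c -> e a c ->
  exists s, link_path e' f' a b c s.
Proof.
move=> an bn cn eab ebc eac; have [s ls] := inv_link I eab ebc eac.
case: (boolP [&& a \in F, b \in F & c \in F]) => [/and3P[aF bF cF] | nF]; last first.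
  by exists s; apply: link_old_outside.
have [s' ls' dF] : exists2 s', link_path e f a b c s' & head 0 s' \in F.
  case: (ls) => _ _ _ /(_ F fF aF bF cF) /orP[dF|dF]; first by exists s.
  by exists (rev s); rewrite ?head_rev //; apply: link_path_rev.
by exists (n :: s'); apply: link_old_inside.
Qed.

Lemma stack_link a b c : e' a b -> e' b c -> e' a c -> exists s, link_path e' f' a b c s.
Proof.
case: (eqVneq a n) => [->|an]; first exact: link_new.
case: (eqVneq b n) => [->|bn] eab ebc eac.
  rewrite stack_sym in eab.
  by have [s /link_path_swap12 ls] := link_new eab eac ebc; exists s.
case: (eqVneq c n) => [ecn|cn].
  rewrite ecn stack_sym in eac; rewrite ecn stack_sym in ebc; rewrite ecn.
  by have [s /link_path_swap12/link_path_swap23 ls] := link_new eac eab ebc; exists s.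
by rewrite !stack_old // in eab ebc eac; apply: link_old.
Qed.

Lemma stacked_inv_step : stacked_inv n.+1 e' f'.
Proof.
split; [exact: stack_sym | exact: stack_irr | exact: stack_bound | exact: stack_facet
       | exact: stack_chord | exact: stack_link].
Qed.

End Stacking.

Lemma stacked4_inv n e f : stacked4 n e f -> stacked_inv n e f.
Proof. by elim=> [|m e0 f0 F _ I fF]; [exact: simplex_inv | exact: stacked_inv_step]. Qed.

Definition induced_in (n : nat) (e : rel nat) (W : finType) (H : rel W) : Prop :=
  exists g : W -> nat,
    [/\ injective g, forall w, g w < n & forall a b, e (g a) (g b) = H a b].

Lemma has_induced_iff (V W : finType) (E : rel V) (H : rel W) n (e : rel nat)
    (h : V -> nat) :
  injective h -> (forall v, h v < n) -> (forall i, i < n -> exists v, h v = i) ->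
  (forall u v, E u v = e (h u) (h v)) -> has_induced E H <-> induced_in n e H.
Proof.
move=> h_inj h_lt h_onto h_edge; split.
  case=> phi [phi_inj phi_edge]; exists (h \o phi); split=> //=.
  - exact: inj_comp.
  - by move=> a b; rewrite -h_edge phi_edge.
case=> g [g_inj g_lt g_edge].
have [phi phiK] := fin_all_exists (fun w => h_onto _ (g_lt w)).
exists phi; split.
  by move=> a b /(congr1 h); rewrite !phiK => /g_inj.
by move=> a b; rewrite h_edge !phiK g_edge.
Qed.

Section Join.

Variables (n : nat) (e : rel nat) (f : pred (seq nat)).
Hypothesis I : stacked_inv n e f.
Variables (G3 : rel 'I_3) (G6 : rel 'I_6) (g : 'I_3 + 'I_6 -> nat).
Hypotheses (g_inj : injective g) (g_edge : forall x y, e (g x) (g y) = gjoin G3 G6 x y).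

Let c (i : 'I_3) : nat := g (inl i).
Let w (j : 'I_6) : nat := g (inr j).

Let cw i j : e (c i) (w j). Proof. by rewrite g_edge. Qed.
Let wc i j : e (w j) (c i). Proof. by rewrite g_edge. Qed.
Let c_ne i j : i != j -> c i != c j.
Proof. by apply: contra => /eqP /g_inj [->]. Qed.
Let w_ne i j : i != j -> w i != w j.
Proof. by apply: contra => /eqP /g_inj [->]. Qed.

(* A non-edge c_i c_j forces each pair w_x w_y to be adjacent: otherwise
   c_i w_x c_j w_y would be an induced 4-cycle. *)
Lemma join_right_clique i j : i != j -> ~~ G3 i j -> forall x y, x != y -> G6 x y.
Proof.
move=> nij nG x y nxy; apply/negPn/negP => nG6.
have := inv_chord I (cw i x) (wc j x) (cw j y) (wc i y) (c_ne nij) (w_ne nxy).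
by rewrite !g_edge /= (negbTE nG) (negbTE nG6).
Qed.

(* The left part is a triangle: else w_0 w_1 w_2 is a triangle whose link
   contains the triangle w_3 w_4 w_5. *)
Lemma join_left_clique i j : i != j -> G3 i j.
Proof.
move=> nij; apply/negPn/negP => nG.
pose o k (hk : k < 6) : 'I_6 := Ordinal hk.
have ew k l (hk : k < 6) (hl : l < 6) : k != l -> e (w (o k hk)) (w (o l hl)).
  by move=> nkl; rewrite g_edge /= (join_right_clique nij nG).
have [s [_ ps ms _]] := inv_link I (ew 0 1 isT isT isT) (ew 1 2 isT isT isT)
                                   (ew 0 2 isT isT isT).
have ws k (hk : k < 6) : 2 < k -> w (o k hk) \in s.
  by move=> k2; rewrite ms !ew //; apply/eqP => ek; move: k2; rewrite -ek.
apply: (induced_path_no_triangle ps (ws 3 isT isT) (ws 4 isT isT) (ws 5 isT isT));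
  by [apply: w_ne | apply: ew].
Qed.

(* The link of the triangle c_0 c_1 c_2 contains all six w_j, so its first
   six vertices with the c_i induce K3 * P6. *)
Lemma join_K3_P6 : induced_in n e (gjoin K3 P6).
Proof.
pose i0 : 'I_3 := Ordinal (isT : 0 < 3).
pose i1 : 'I_3 := Ordinal (isT : 1 < 3).
pose i2 : 'I_3 := Ordinal (isT : 2 < 3).
have ec i j : i != j -> e (c i) (c j) by move=> nij; rewrite g_edge /= join_left_clique.
have [s [_ [us ed] ms _]] := inv_link I (ec i0 i1 isT) (ec i1 i2 isT) (ec i0 i2 isT).
have cs i x : x \in s -> e (c i) x.
  rewrite ms => /and3P[h0 h1 h2].
  by case: i => [[|[|[|k]]] hk] //; [move: h0 | move: h1 | move: h2];
    congr (e (g (inl _)) x); apply: val_inj.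
have ws j : w j \in s by rewrite ms !cw.
have sz6 : 6 <= size s.
  have sub : {subset map w (enum 'I_6) <= s} by move=> x /mapP [j _ ->].
  have := uniq_leq_size _ sub; rewrite size_map size_enum_ord; apply.
  by rewrite map_inj_uniq ?enum_uniq // => x y /g_inj [].
have hs (j : 'I_6) : j < size s := leq_trans (ltn_ord j) sz6.
have nths (j : 'I_6) : nth 0 s j \in s := mem_nth 0 (hs j).
pose g' (x : 'I_3 + 'I_6) : nat := match x with inl i => c i | inr j => nth 0 s j end.
exists g'; split.
- case=> [i|j] [i'|j'] /=.
  + by move/g_inj.
  + by move=> ex; have := cs i _ (nths j'); rewrite ex (negbTE (inv_irr I _)).
  + by move=> ex; have := cs i' _ (nths j); rewrite -ex (negbTE (inv_irr I _)).
  + by move/eqP; rewrite nth_uniq ?hs // => /eqP /val_inj ->.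
- case=> [i|j] /=; first exact: (inv_bound I (cw i ord0)).
  by have := cs i0 _ (nths j); rewrite (inv_sym I) => /(inv_bound I).
- case=> [i|j] [i'|j'] /=.
  + rewrite /K3; case: eqVneq => [->|nii']; last exact: ec.
    exact/negbTE/(inv_irr I).
  + exact: cs.
  + by rewrite (inv_sym I) cs.
  + by rewrite /P6 ed ?hs.
Qed.

End Join.

Theorem lemma4p6 (V : finType) (E : rel V) :
  stacked4_polytopal_graph E ->
  (exists (G3 : rel 'I_3) (G6 : rel 'I_6),
      [/\ simple_graph G3, simple_graph G6 & has_induced E (gjoin G3 G6)]) ->
  has_induced E (gjoin K3 P6).
Proof.
move=> [n [e [f [h [st h_inj h_lt h_onto h_edge]]]]] [G3 [G6 [_ _ hG]]].
have transfer := has_induced_iff _ h_inj h_lt h_onto h_edge.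
have [g [g_inj _ g_edge]] := (transfer _ (gjoin G3 G6)).1 hG.
by apply/transfer; apply: (join_K3_P6 (stacked4_inv st) g_inj g_edge).
Qed.
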